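(* Let $\sigma=\{\gamma_d(s_1),\dots\}$ and $\tau$ be simplices on $\gamma_d$ (finite subsets of $\gamma_d$ of size at most $d+1$) which are $(d+2)$-interlacing, where the interlacing sequence begins with an element of $\sigma$ if $d$ is even, and begins with an element of $\tau$ if $d$ is odd. Then there is a point $p\in\mathrm{conv}(\sigma)\cap\mathrm{conv}(\tau)$ with $h_\sigma(p)<h_\tau(p)$.
   Context: $\gamma_d=\{(t,t^2,\dots,t^d):t\in\mathbb{R}\}$ is the moment curve in $\mathbb{R}^d$, and points of $\gamma_d$ are linearly ordered by their parameter $t$. For subsets $\sigma,\tau\subseteq\gamma_d$, they are $k$-interlacing if there is a sequence $v_1<v_2<\dots<v_k$ of elements of $\sigma\cup\tau$ such that either $v_1\in\sigma, v_2\in\tau, v_3\in\sigma,\dots$ (alternating, beginning with an element of $\sigma$) or $v_1\in\tau,v_2\in\sigma,v_3\in\tau,\dots$ (alternating, beginning with an element of $\tau$). For a simplex $\sigma=\{\gamma_d(t_1),\dots,\gamma_d(t_k)\}$, $k\le d+1$, its lifting is $\hat\sigma=\{\gamma_{d+1}(t_1),\dots,\gamma_{d+1}(t_k)\}$, and the height function $h_\sigma:\mathrm{conv}(\sigma)\to\mathbb{R}$ assigns to $p$ the last coordinate of the unique point of $\mathrm{conv}(\hat\sigma)$ whose projection (deleting the last coordinate) is $p$. *)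

From mathcomp Require Import all_boot all_order all_algebra.
Unset Strict Implicit. Unset Printing Implicit Defensive.
Import Order.TTheory GRing.Theory Num.Theory.
Local Open Scope ring_scope.

Section Moment.
Variable R : realFieldType.

Definition gamma (d : nat) (t : R) : 'rV[R]_d := \row_(i < d) t ^+ i.+1.

(* A simplex on gamma_d is given by the (distinct) parameters of its vertices;
   at most d+1 vertices. *)
Definition is_simplex (d : nat) (S : seq R) : bool := uniq S && (size S <= d.+1)%N.

Definition in_conv (d : nat) (S : seq R) (p : 'rV[R]_d) : Prop :=
  exists lam : R -> R,
    (forall t, t \in S -> 0 <= lam t) /\
    \sum_(t <- S) lam t = 1 /\
    p = \sum_(t <- S) lam t *: gamma d t.

Definition proj_last (d : nat) (q : 'rV[R]_d.+1) : 'rV[R]_d :=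
  \row_(i < d) q 0 (widen_ord (leqnSn d) i).
Definition last_coord (d : nat) (q : 'rV[R]_d.+1) : R := q 0 ord_max.

(* y is the height h_S(p): y is the last coordinate of a point of conv(S^)
   (the lifting of S to gamma_{d+1}) whose projection is p.
   (Such a point is unique, so this relation is the graph of h_S on conv(S).) *)
Definition is_height (d : nat) (S : seq R) (p : 'rV[R]_d) (y : R) : Prop :=
  exists q : 'rV[R]_d.+1, in_conv d.+1 S q /\ proj_last d q = p /\ last_coord d q = y.

Definition interlacing_from (A B : seq R) (k : nat) : Prop :=
  exists v : seq R, size v = k /\ sorted <%R v /\
    (forall i, (i < k)%N -> nth 0 v i \in (if odd i then B else A)).

End Moment.

Arguments gamma {R}.
Arguments is_simplex {R}.
Arguments in_conv {R}.
Arguments proj_last {R}.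
Arguments last_coord {R}.
Arguments is_height {R}.
Arguments interlacing_from {R}.

From mathcomp Require Import all_boot all_order all_algebra.

Set Implicit Arguments.
Unset Strict Implicit.
Unset Printing Implicit Defensive.

Import Order.TTheory GRing.Theory Num.Theory.
Local Open Scope ring_scope.

(* Let v_1 < ... < v_(d+2) be the interlacing points and
   w_i = 1 / prod_(j <> i) (v_i - v_j) the weights of the divided difference
   at them.  The divided difference of order d+1 kills polynomials of degree
   at most d and sends t^(d+1) to 1, so the w_i form an affine dependence of
   the points gamma_d(v_i) with top moment sum_i w_i v_i^(d+1) = 1.  The signs
   of the w_i alternate with w_(d+2) > 0, so the parity convention of the
   interlacing puts the positive weights on tau and the others on sigma.
   Normalising both halves by the total positive weight W gives one point p
   of conv(sigma) and conv(tau); since at most d+1 points of gamma_(d+1) are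
   affinely independent, the heights at p are computed from the same
   coefficients, and h_tau(p) - h_sigma(p) = 1/W > 0. *)

Section LagrangeBasis.
Variable F : fieldType.
Implicit Types (v : seq F) (t u : F) (f : {poly F}).

Definition lagrange_basis v t : {poly F} := \prod_(s <- rem t v) ('X - s%:P).

Definition divdiff_weight v t : F := (\prod_(s <- rem t v) (t - s))^-1.

Lemma size_lagrange_basis v t : t \in v -> size (lagrange_basis v t) = size v.
Proof. by move=> tv; rewrite size_prod_XsubC size_rem //; case: v tv. Qed.

Lemma lagrange_basis_monic v t : lagrange_basis v t \is monic.
Proof. exact: monic_prod_XsubC. Qed.

Lemma horner_lagrange_basis_self v t :
  (lagrange_basis v t).[t] = (divdiff_weight v t)^-1.
Proof.
by rewrite invrK horner_prod; apply: eq_bigr => s _; rewrite hornerXsubC.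
Qed.

Lemma horner_lagrange_basis_other v t u : uniq v -> u \in v -> u != t ->
  (lagrange_basis v t).[u] = 0.
Proof.
move=> uv uv_in ut; rewrite horner_prod (bigD1_seq u) ?rem_uniq ?rem_mem //=.
by rewrite hornerXsubC subrr mul0r.
Qed.

Lemma divdiff_weight_neq0 v t : uniq v -> divdiff_weight v t != 0.
Proof.
move=> uv; rewrite invr_eq0 prodf_seq_neq0; apply/allP => s s_in /=.
by rewrite subr_eq0; apply: contraTneq s_in => <-; rewrite mem_rem_uniqF.
Qed.

Lemma lagrange_interpolation v f : uniq v -> (size f <= size v)%N ->
  f = \sum_(t <- v) (f.[t] * divdiff_weight v t) *: lagrange_basis v t.
Proof.
move=> uv szf; apply/eqP; rewrite -subr_eq0; apply/eqP.
set g := f - _.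
have size_g : (size g <= size v)%N.
  rewrite (leq_trans (size_polyD _ _)) // geq_max szf size_polyN.
  rewrite (leq_trans (size_sum _ _ _)) //; apply/bigmax_leqP_seq => t tv _.
  by rewrite (leq_trans (size_scale_leq _ _)) // size_lagrange_basis.
have roots_g : all (root g) v.
  apply/allP => u uv_in; rewrite /root hornerD hornerN horner_sum.
  rewrite (bigD1_seq u) //= big1_seq => [|t /andP[tu _]]; last first.
    by rewrite hornerZ horner_lagrange_basis_other ?mulr0 // eq_sym.
  rewrite addr0 hornerZ horner_lagrange_basis_self -mulrA.
  by rewrite mulfV ?divdiff_weight_neq0 // mulr1 subrr.
apply: contraTeq size_g => g_neq0.
by rewrite -ltnNge (max_poly_roots g_neq0 roots_g uv).
Qed.

Lemma sum_divdiff_weight_poly v f : uniq v -> (size f <= size v)%N ->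
  \sum_(t <- v) f.[t] * divdiff_weight v t = f`_(size v).-1.
Proof.
move=> uv szf; rewrite [in RHS](lagrange_interpolation uv szf) coef_sum.
apply: eq_big_seq => t tv; rewrite coefZ -(size_lagrange_basis tv).
by rewrite -lead_coefE (monicP (lagrange_basis_monic v t)) mulr1.
Qed.

Lemma sum_divdiff_weight_exp v k : uniq v -> (k < size v)%N ->
  \sum_(t <- v) divdiff_weight v t * t ^+ k = (k == (size v).-1)%:R.
Proof.
move=> uv kv; rewrite eq_sym -coefXn -sum_divdiff_weight_poly ?size_polyXn //.
by apply: eq_bigr => t _; rewrite hornerXn mulrC.
Qed.

Lemma moments_eq0_in v (a : F -> F) : uniq v ->
  (forall k, (k < size v)%N -> \sum_(t <- v) a t * t ^+ k = 0) ->
  {in v, forall t, a t = 0}.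
Proof.
move=> uv a_moments t tv.
have a_poly f : (size f <= size v)%N -> \sum_(s <- v) a s * f.[s] = 0.
  move=> szf; under eq_bigr => s _ do rewrite (horner_coef_wide _ szf) mulr_sumr.
  rewrite exchange_big /= big1 // => k _.
  under eq_bigr => s _ do rewrite mulrCA.
  by rewrite -mulr_sumr a_moments ?mulr0.
have := a_poly _ (eq_leq (size_lagrange_basis tv)).
rewrite (bigD1_seq t) //= big1_seq => [|s /andP[st sv]]; last first.
  by rewrite horner_lagrange_basis_other ?mulr0.
rewrite addr0 horner_lagrange_basis_self => /eqP.
by rewrite mulf_eq0 invr_eq0 (negbTE (divdiff_weight_neq0 t uv)) orbF => /eqP.
Qed.

End LagrangeBasis.

Lemma prodr_subr_sign (R : comPzRingType) (a : R) (s : seq R) :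
  \prod_(y <- s) (a - y) = (-1) ^+ size s * \prod_(y <- s) (y - a).
Proof.
elim: s => [|y s IH]; first by rewrite !big_nil mulr1.
by rewrite !big_cons IH exprS mulrCA -[a - y]opprB mulN1r !mulNr mulrN.
Qed.

Section AlternatingWeights.
Variable R : realFieldType.

Lemma divdiff_weight_nth_gt0 (v : seq R) i : sorted <%R v -> (i < size v)%N ->
  (0 < divdiff_weight v (nth 0 v i)) = ~~ odd (size v - i.+1).
Proof.
move=> sv iv; set x := nth 0 v i.
have uv : uniq v by apply: (sorted_uniq lt_trans ltxx).
have : pairwise <%R v by rewrite -sorted_pairwise //; apply: lt_trans.
rewrite -{1}(cat_take_drop i v) (drop_nth 0 iv) -/x pairwise_cat pairwise_cons.
rewrite allrel_consr => /and3P[/andP[lt_take _] _ /andP[gt_drop _]].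
have take_gt0 : 0 < \prod_(y <- take i v) (x - y).
  by rewrite big_seq; apply: prodr_gt0 => y /(allP lt_take); rewrite subr_gt0.
have drop_gt0 : 0 < \prod_(y <- drop i.+1 v) (y - x).
  by rewrite big_seq; apply: prodr_gt0 => y /(allP gt_drop); rewrite subr_gt0.
rewrite invr_gt0 remE index_uniq // big_cat /=.
rewrite (prodr_subr_sign x (drop _ _)) size_drop mulrCA.
rewrite pmulr_lgt0 ?mulr_gt0 // -signr_odd; case: odd => /=.
  by rewrite expr1 oppr_gt0 ltr10.
by rewrite expr0 ltr01.
Qed.

Lemma interlacing_divdiff_weight_sign (A B : seq R) n : interlacing_from A B n ->
  exists v, [/\ uniq v, size v = n,
    {in v, forall t, 0 < divdiff_weight v t -> t \in (if odd n then A else B)} &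
    {in v, forall t, divdiff_weight v t <= 0 -> t \in (if odd n then B else A)}].
Proof.
move=> [v [szv [sv v_alt]]]; have uv := sorted_uniq lt_trans ltxx sv.
have alt_sign t : t \in v ->
    t \in (if (0 < divdiff_weight v t) (+) odd n then B else A).
  move=> tv; have i_lt : (index t v < n)%N by rewrite -szv index_mem.
  have := v_alt _ i_lt; rewrite (nth_index 0 tv).
  rewrite -[X in divdiff_weight v X](nth_index 0 tv).
  rewrite divdiff_weight_nth_gt0 ?index_mem //.
  by rewrite szv oddB // oddS; case: odd; case: odd.
exists v; split=> // t tv; have := alt_sign t tv; last rewrite leNgt.
  by move=> + pos; rewrite pos; case: odd.
by move=> + /negbTE neg; rewrite neg; case: odd.
Qed.

End AlternatingWeights.

Lemma sum_if_mem (T : eqType) (V : nmodType) (A S : seq T) (F : T -> V) :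
  uniq A -> uniq S -> {subset A <= S} ->
  \sum_(t <- S) (if t \in A then F t else 0) = \sum_(t <- A) F t.
Proof.
move=> uA uS sub_AS; rewrite -big_mkcond -big_filter.
apply/perm_big/uniq_perm; [exact: filter_uniq | by [] |].
by move=> t; rewrite mem_filter andb_idr //; apply: sub_AS.
Qed.

Section ConvexHull.
Variables (R : realFieldType) (d : nat).
Implicit Types (S A : seq R) (mu : R -> R).

Lemma sum_gamma_coord n S mu (j : 'I_n) :
  (\sum_(t <- S) mu t *: gamma n t) 0 j = \sum_(t <- S) mu t * t ^+ j.+1.
Proof. by rewrite summxE; apply: eq_bigr => t _; rewrite !mxE. Qed.

Lemma proj_last_sum_gamma S mu :
  proj_last d (\sum_(t <- S) mu t *: gamma d.+1 t) = \sum_(t <- S) mu t *: gamma d t.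
Proof. by apply/rowP => j; rewrite mxE !sum_gamma_coord. Qed.

Lemma last_coord_sum_gamma S mu :
  last_coord d (\sum_(t <- S) mu t *: gamma d.+1 t) = \sum_(t <- S) mu t * t ^+ d.+1.
Proof. exact: sum_gamma_coord. Qed.

Lemma in_conv_subset S A mu : uniq S -> uniq A -> {subset A <= S} ->
  {in A, forall t, 0 <= mu t} -> \sum_(t <- A) mu t = 1 ->
  in_conv d S (\sum_(t <- A) mu t *: gamma d t).
Proof.
move=> uS uA sub_AS mu_ge0 mu_sum.
exists (fun t => if t \in A then mu t else 0); split; [|split].
- by move=> t _; case: ifP => // /mu_ge0.
- by rewrite sum_if_mem.
- rewrite -(sum_if_mem _ uA uS sub_AS); apply: eq_bigr => t _.
  by case: ifP; rewrite ?scale0r.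
Qed.

Lemma is_height_conv S mu h : uniq S -> (size S <= d.+1)%N ->
  \sum_(t <- S) mu t = 1 -> is_height d S (\sum_(t <- S) mu t *: gamma d t) h ->
  h = \sum_(t <- S) mu t * t ^+ d.+1.
Proof.
move=> uS szS mu_sum [_ [[nu [_ [nu_sum ->]]] [proj_eq <-]]].
rewrite last_coord_sum_gamma; apply: eq_big_seq => t tS; congr (_ * _).
apply/eqP; rewrite -subr_eq0; apply/eqP; move: t tS.
apply: (moments_eq0_in (a := fun t => nu t - mu t) uS) => k ltkS.
under eq_bigr => s _ do rewrite mulrBl.
rewrite sumrB; apply/eqP; rewrite subr_eq0; apply/eqP.
case: k ltkS => [|k] ltkS.
  by rewrite !(eq_bigr _ (fun s _ => mulr1 _)) nu_sum mu_sum.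
have ltkd : (k < d)%N by rewrite -ltnS (leq_trans ltkS).
by rewrite -!(sum_gamma_coord _ _ (Ordinal ltkd)) -proj_last_sum_gamma proj_eq.
Qed.

Lemma is_height_subset S A mu h : uniq S -> (size S <= d.+1)%N ->
  uniq A -> {subset A <= S} -> \sum_(t <- A) mu t = 1 ->
  is_height d S (\sum_(t <- A) mu t *: gamma d t) h ->
  h = \sum_(t <- A) mu t * t ^+ d.+1.
Proof.
move=> uS szS uA sub_AS mu_sum.
set nu := fun t => if t \in A then mu t else 0.
have nu_sum : \sum_(t <- S) nu t = 1 by rewrite sum_if_mem.
have nu_gamma : \sum_(t <- S) nu t *: gamma d t = \sum_(t <- A) mu t *: gamma d t.
  rewrite -(sum_if_mem _ uA uS sub_AS); apply: eq_bigr => t _.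
  by rewrite /nu; case: ifP; rewrite ?scale0r.
rewrite -nu_gamma => /(is_height_conv uS szS nu_sum) ->.
rewrite -(sum_if_mem _ uA uS sub_AS); apply: eq_bigr => t _.
by rewrite /nu; case: ifP; rewrite ?mul0r.
Qed.

End ConvexHull.

Lemma divdiff_weight_affine_dependence (R : realFieldType) d (v : seq R) :
  uniq v -> size v = d.+2 ->
  [/\ \sum_(t <- v) divdiff_weight v t = 0,
      \sum_(t <- v) divdiff_weight v t *: gamma d t = 0 &
      \sum_(t <- v) divdiff_weight v t * t ^+ d.+1 = 1].
Proof.
move=> uv szv.
have moment k : (k < d.+2)%N ->
    \sum_(t <- v) divdiff_weight v t * t ^+ k = (k == d.+1)%:R.
  by move=> lt_k; rewrite sum_divdiff_weight_exp //= szv.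
split.
- transitivity (\sum_(t <- v) divdiff_weight v t * t ^+ 0); last by rewrite moment.
  by apply: eq_bigr => t _; rewrite mulr1.
- apply/rowP => j; rewrite sum_gamma_coord mxE moment; last by rewrite !ltnS ltnW.
  by rewrite eqSS ltn_eqF.
- by rewrite moment ?eqxx.
Qed.

Section AffineDependence.
Variables (R : realFieldType) (d : nat) (w : R -> R) (v : seq R).
Hypotheses (v_uniq : uniq v) (w_sum : \sum_(t <- v) w t = 0)
  (w_gamma : \sum_(t <- v) w t *: gamma d t = 0)
  (w_top : \sum_(t <- v) w t * t ^+ d.+1 = 1).

Let vpos := [seq t <- v | 0 < w t].
Let vneg := [seq t <- v | w t <= 0].
Let W := \sum_(t <- vpos) w t.

Let sum_split_sign (V : nmodType) (F : R -> V) :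
  \sum_(t <- v) F t = \sum_(t <- vpos) F t + \sum_(t <- vneg) F t.
Proof.
rewrite (bigID (fun t => 0 < w t)) !big_filter /=.
by congr (_ + _); apply: eq_bigl => t; rewrite leNgt.
Qed.

Let pos_mass_gt0 : 0 < W.
Proof.
have has_pos : has (fun t => 0 < w t) v.
  apply: contraT; rewrite -all_predC => /allP /= w_le0.
  have : \sum_(t <- v | t \in v) - w t == 0 by rewrite -big_seq sumrN w_sum oppr0.
  rewrite psumr_eq0 => [/allP w_eq0|t /w_le0]; last by rewrite oppr_ge0 leNgt.
  move: w_top; rewrite big_seq big1 => [/eqP|t tv]; first by rewrite eq_sym oner_eq0.
  by have /= := w_eq0 t tv; rewrite tv oppr_eq0 => /eqP ->; rewrite mul0r.
have W_ge0 : 0 <= W by rewrite /W big_filter sumr_ge0 // => t /ltW.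
rewrite lt_def W_ge0 andbT /W big_filter psumr_neq0 => [|t /ltW //].
by apply: sub_has has_pos => t; rewrite andbb.
Qed.

Let neg_part (V : zmodType) (F : R -> V) : \sum_(t <- v) F t = 0 ->
  \sum_(t <- vneg) F t = - \sum_(t <- vpos) F t.
Proof. by rewrite sum_split_sign => /eqP; rewrite addrC addr_eq0 => /eqP. Qed.

Lemma affine_dependence_split (S T : seq R) : is_simplex d S -> is_simplex d T ->
  {in v, forall t, 0 < w t -> t \in T} -> {in v, forall t, w t <= 0 -> t \in S} ->
  exists p, in_conv d S p /\ in_conv d T p /\
    (forall hs ht, is_height d S p hs -> is_height d T p ht -> hs < ht).
Proof.
move=> /andP[uS szS] /andP[uT szT] posT negS.
have uvpos : uniq vpos by exact: filter_uniq.
have uvneg : uniq vneg by exact: filter_uniq.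
have sub_T : {subset vpos <= T}.
  by move=> t; rewrite mem_filter => /andP[+ tv]; apply: posT.
have sub_S : {subset vneg <= S}.
  by move=> t; rewrite mem_filter => /andP[+ tv]; apply: negS.
pose c := W^-1; have c_gt0 : 0 < c by rewrite invr_gt0.
pose mu_pos t := c * w t; pose mu_neg t := - (c * w t).
have mu_pos_sum : \sum_(t <- vpos) mu_pos t = 1 by rewrite -mulr_sumr mulVf ?gt_eqF.
have mu_neg_sum : \sum_(t <- vneg) mu_neg t = 1.
  by rewrite sumrN -mulr_sumr neg_part // mulrN opprK mulVf ?gt_eqF.
have p_neg : \sum_(t <- vneg) mu_neg t *: gamma d t =
              \sum_(t <- vpos) mu_pos t *: gamma d t.
  under eq_bigr do rewrite scaleNr -scalerA.
  under [RHS]eq_bigr do rewrite -scalerA.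
  by rewrite sumrN -!scaler_sumr neg_part // scalerN opprK.
exists (\sum_(t <- vpos) mu_pos t *: gamma d t); split; [|split].
- rewrite -p_neg; apply: in_conv_subset => // t.
  by rewrite mem_filter => /andP[w_le0 _]; rewrite oppr_ge0 pmulr_rle0.
- apply: in_conv_subset => // t.
  by rewrite mem_filter => /andP[w_gt0 _]; rewrite pmulr_rge0 ?ltW.
- move=> hs ht; rewrite -{1}p_neg.
  move=> /(is_height_subset uS szS uvneg sub_S mu_neg_sum) ->.
  move=> /(is_height_subset uT szT uvpos sub_T mu_pos_sum) ->.
  rewrite -subr_gt0 /mu_pos /mu_neg.
  under eq_bigr do rewrite -mulrA.
  under [X in _ - X]eq_bigr do rewrite mulNr -mulrA.
  by rewrite sumrN opprK -!mulr_sumr -mulrDr -sum_split_sign w_top mulr1.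
Qed.

End AffineDependence.

Theorem proposition2p3 (R : realFieldType) (d : nat) (sigma tau : seq R) :
  is_simplex d sigma -> is_simplex d tau ->
  (if odd d then interlacing_from tau sigma d.+2
            else interlacing_from sigma tau d.+2) ->
  exists p : 'rV[R]_d,
    in_conv d sigma p /\ in_conv d tau p /\
    (forall hs ht : R, is_height d sigma p hs -> is_height d tau p ht -> hs < ht).
Proof.
move=> simplex_sigma simplex_tau interlacing.
have [v [uv szv pos_tau neg_sigma]] : exists v, [/\ uniq v, size v = d.+2,
    {in v, forall t, 0 < divdiff_weight v t -> t \in tau} &
    {in v, forall t, divdiff_weight v t <= 0 -> t \in sigma}].
  by case: ifP interlacing => odd_d /interlacing_divdiff_weight_sign;
    rewrite /= negbK odd_d.
have [w_sum w_gamma w_top] := divdiff_weight_affine_dependence uv szv.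
exact: (affine_dependence_split uv w_sum w_gamma w_top).
Qed.
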